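(* Let $a,b$ be real numbers with $0<a<b$. (1) There exists a proper algebraic subset $\Sigma\subset(\mathbb{R}^2)^3$ such that for every $(p_1,p_2,p_3)\in(\mathbb{R}^2)^3\setminus\Sigma$, with $p_i=(p_{i1},p_{i2})$, there is exactly one triple of constants $(c_1,c_2,c_3)$ with $c_i>0$ for which the ellipse $a(x_1-p_{11})^2+b(x_2-p_{12})^2=c_1$ and the two circles $(x_1-p_{i1})^2+(x_2-p_{i2})^2=c_i$ ($i=2,3$) are tangent at some point; moreover, for this triple the point of tangency is unique. (2) Let $\ell>3$. There exists a proper algebraic subset $\Sigma\subset(\mathbb{R}^2)^\ell$ such that for every $(p_1,\dots,p_\ell)\in(\mathbb{R}^2)^\ell\setminus\Sigma$, with $p_i=(p_{i1},p_{i2})$, and for all constants $c_1,\dots,c_\ell>0$, the ellipse $a(x_1-p_{11})^2+b(x_2-p_{12})^2=c_1$ and the $\ell-1$ circles $(x_1-p_{i1})^2+(x_2-p_{i2})^2=c_i$ ($2\le i\le \ell$) are not tangent at any point.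
   Context: Curves $\{F_i=c_i\}$, $i=1,\dots,k$, in the plane (given as level sets of smooth functions $F_i$ with non-vanishing gradient on them) are said to be tangent at a point $q$ if $q$ lies on all of them and they all have the same tangent line at $q$, i.e. the gradient vectors $\nabla F_1(q),\dots,\nabla F_k(q)$ span a space of dimension less than $2$. *)

From Stdlib Require Import Reals Lra List Arith.
Open Scope R_scope.

Inductive mpoly : Type :=
| PConst : R -> mpoly
| PVar : nat -> mpoly
| PAdd : mpoly -> mpoly -> mpoly
| PMul : mpoly -> mpoly -> mpoly.

Fixpoint peval (env : nat -> R) (P : mpoly) : R :=
  match P with
  | PConst c => c
  | PVar n => env n
  | PAdd P Q => peval env P + peval env Q
  | PMul P Q => peval env P * peval env Q
  end.

Fixpoint vars_lt (n : nat) (P : mpoly) : Prop :=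
  match P with
  | PConst _ => True
  | PVar k => (k < n)%nat
  | PAdd P Q => vars_lt n P /\ vars_lt n Q
  | PMul P Q => vars_lt n P /\ vars_lt n Q
  end.

(* A configuration (p_1,...,p_l) in (R^2)^l is a map p : nat -> R*R, of which only
   indices 0..l-1 matter; its coordinates are x_{2i} = fst (p i), x_{2i+1} = snd (p i). *)
Definition coords (p : nat -> R * R) (n : nat) : R :=
  if Nat.even n then fst (p (Nat.div2 n)) else snd (p (Nat.div2 n)).

Definition proper_algebraic_subset (l : nat) (S : (nat -> R * R) -> Prop) : Prop :=
  (exists Ps : list mpoly,
      (forall P, In P Ps -> vars_lt (2 * l) P) /\
      (forall p, S p <-> (forall P, In P Ps -> peval (coords p) P = 0))) /\
  (exists p, ~ S p).

Definition is_gradient (F : R * R -> R) (q : R * R) (g : R * R) : Prop :=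
  derivable_pt_lim (fun t => F (t, snd q)) (fst q) (fst g) /\
  derivable_pt_lim (fun t => F (fst q, t)) (snd q) (snd g).

(* The k curves {F_i = c_i}, i < k, are tangent at q: q lies on all of them and
   the gradients span a space of dimension < 2 (all 2x2 minors vanish). *)
Definition tangent_at (k : nat) (F : nat -> R * R -> R) (c : nat -> R) (q : R * R) : Prop :=
  (forall i, (i < k)%nat -> F i q = c i) /\
  exists g : nat -> R * R,
    (forall i, (i < k)%nat -> is_gradient (F i) q (g i)) /\
    (forall i j, (i < k)%nat -> (j < k)%nat ->
        fst (g i) * snd (g j) - snd (g i) * fst (g j) = 0).

Definition ellipse_fun (a b : R) (p : R * R) (x : R * R) : R :=
  a * (fst x - fst p) ^ 2 + b * (snd x - snd p) ^ 2.

Definition circle_fun (p : R * R) (x : R * R) : R :=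
  (fst x - fst p) ^ 2 + (snd x - snd p) ^ 2.

Definition curve_family (a b : R) (p : nat -> R * R) (i : nat) : R * R -> R :=
  match i with
  | O => ellipse_fun a b (p O)
  | S _ => circle_fun (p i)
  end.

From Stdlib Require Import Reals List Lra Lia Psatz.
From Coquelicot Require Import Coquelicot.
Open Scope R_scope.

(* The gradient of a circle centred at p_i is 2 (q - p_i).  Two such gradients are
   parallel exactly when q lies on the line through the centres, and three of them
   force the centres to be collinear, a nontrivial polynomial condition.  For the
   ellipse and two circles, q must in addition have its ellipse normal
   (a (q_1 - p_11), b (q_2 - p_12)) parallel to that line.  Since a <> b these are
   two independent linear equations in q, whose unique solution Q determines the
   constants c_i as the values of the curves at Q; they are positive as long as Q
   avoids the centres, which is again a polynomial condition on the p_i. *)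

Definition vsub (u v : R * R) : R * R := (fst u - fst v, snd u - snd v).
Definition scale (a b : R) (u : R * R) : R * R := (a * fst u, b * snd u).
Definition cross (u v : R * R) : R := fst u * snd v - snd u * fst v.

Lemma scale_1_1 u : scale 1 1 u = u.
Proof. destruct u as [u1 u2]; unfold scale; simpl; f_equal; ring. Qed.

Lemma cross_eq0_trans x y w : w <> (0, 0) ->
  cross x w = 0 -> cross y w = 0 -> cross x y = 0.
Proof.
destruct x as [x1 x2], y as [y1 y2], w as [w1 w2]; unfold cross; simpl.
intros Hw Hx Hy.
assert (E1 : w1 * (x1 * y2 - x2 * y1) = 0).
{ transitivity (- x1 * (y1 * w2 - y2 * w1) + y1 * (x1 * w2 - x2 * w1)); [ring|].
  rewrite Hx, Hy; ring. }
assert (E2 : w2 * (x1 * y2 - x2 * y1) = 0).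
{ transitivity (y2 * (x1 * w2 - x2 * w1) - x2 * (y1 * w2 - y2 * w1)); [ring|].
  rewrite Hx, Hy; ring. }
destruct (Req_dec w1 0) as [->|Hw1]; [destruct (Req_dec w2 0) as [->|Hw2]|].
- contradiction.
- destruct (Rmult_integral _ _ E2); [contradiction | assumption].
- destruct (Rmult_integral _ _ E1); [contradiction | assumption].
Qed.

Lemma vsub_neq0 u v : u <> v -> vsub u v <> (0, 0).
Proof.
destruct u as [u1 u2], v as [v1 v2]; unfold vsub; simpl; intros Huv E.
injection E as E1 E2; apply Huv; f_equal; lra.
Qed.

(* The identity behind "centres of pairwise tangent circles are collinear". *)
Lemma cross_vsub_centres q u v w :
  cross (vsub v u) (vsub w u) =
  cross (vsub q u) (vsub q v) - cross (vsub q u) (vsub q w) + cross (vsub q v) (vsub q w).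
Proof. unfold cross, vsub; simpl; ring. Qed.

Lemma circle_fun_ellipse p q : circle_fun p q = ellipse_fun 1 1 p q.
Proof. unfold circle_fun, ellipse_fun; ring. Qed.

Lemma ellipse_fun_pos a b p q : 0 < a -> 0 < b -> q <> p -> 0 < ellipse_fun a b p q.
Proof.
destruct p as [p1 p2], q as [q1 q2]; unfold ellipse_fun; cbn [fst snd]; intros Ha Hb Hqp.
pose proof (pow2_ge_0 (q1 - p1)); pose proof (pow2_ge_0 (q2 - p2)).
destruct (Req_dec q1 p1) as [E1|E1]; [destruct (Req_dec q2 p2) as [E2|E2]|].
- subst; contradiction.
- assert (0 < (q2 - p2) ^ 2) by (apply pow2_gt_0; lra). nra.
- assert (0 < (q1 - p1) ^ 2) by (apply pow2_gt_0; lra). nra.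
Qed.

Lemma is_gradient_unique F q g g' :
  is_gradient F q g -> is_gradient F q g' -> g = g'.
Proof.
destruct g, g'; intros [H1 H2] [H1' H2']; simpl in *.
f_equal; eapply uniqueness_limite; eassumption.
Qed.

Lemma is_gradient_ellipse_fun a b p q :
  is_gradient (ellipse_fun a b p) q (scale (2 * a) (2 * b) (vsub q p)).
Proof.
unfold is_gradient, ellipse_fun, scale, vsub; simpl.
split; apply is_derive_Reals; auto_derive; trivial; ring.
Qed.

Lemma is_gradient_circle_fun p q :
  is_gradient (circle_fun p) q (scale 2 2 (vsub q p)).
Proof.
unfold is_gradient, circle_fun, scale, vsub; simpl.
split; apply is_derive_Reals; auto_derive; trivial; ring.
Qed.

Lemma tangent_atP k F c q G :
  (forall i, (i < k)%nat -> is_gradient (F i) q (G i)) ->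
  tangent_at k F c q <->
  (forall i, (i < k)%nat -> F i q = c i) /\
  (forall i j, (i < k)%nat -> (j < k)%nat -> cross (G i) (G j) = 0).
Proof.
intros HG; split.
- intros [Hlev [g [Hg Hminor]]]; split; [exact Hlev|].
  intros i j Hi Hj.
  rewrite <- (is_gradient_unique _ _ _ _ (Hg i Hi) (HG i Hi)),
          <- (is_gradient_unique _ _ _ _ (Hg j Hj) (HG j Hj)).
  exact (Hminor i j Hi Hj).
- intros [Hlev Hcross]; split; [exact Hlev|].
  exists G; split; [exact HG | exact Hcross].
Qed.

Definition curve_grad (a b : R) (p : nat -> R * R) (i : nat) (q : R * R) : R * R :=
  match i with
  | O => scale (2 * a) (2 * b) (vsub q (p O))
  | S _ => scale 2 2 (vsub q (p i))
  end.

Lemma is_gradient_curve_family a b p i q :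
  is_gradient (curve_family a b p i) q (curve_grad a b p i q).
Proof.
destruct i; [apply is_gradient_ellipse_fun | apply is_gradient_circle_fun].
Qed.

Lemma tangent_at_curve_family k a b p c q :
  tangent_at k (curve_family a b p) c q <->
  (forall i, (i < k)%nat -> curve_family a b p i q = c i) /\
  (forall i j, (i < k)%nat -> (j < k)%nat ->
     cross (curve_grad a b p i q) (curve_grad a b p j q) = 0).
Proof. apply tangent_atP; intros; apply is_gradient_curve_family. Qed.

Lemma cross_scale_diag s t u v :
  cross (scale s s u) (scale t t v) = s * t * cross u v.
Proof. unfold cross, scale; simpl; ring. Qed.

Definition tangency_point (a b : R) (u0 u1 d : R * R) : R * R :=
  let e1 := cross u1 d in
  let e2 := cross (scale a b u0) d in
  ((b * e1 - e2) / ((b - a) * snd d), (a * e1 - e2) / ((b - a) * fst d)).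

(* Cramer's rule for the line through [u1] with direction [d] and the locus of
   points whose ellipse normal (centre [u0]) is parallel to [d]. *)
Lemma tangency_pointP a b u0 u1 d q : a <> b -> fst d <> 0 -> snd d <> 0 ->
  (cross (vsub q u1) d = 0 /\ cross (scale a b (vsub q u0)) d = 0 <->
   q = tangency_point a b u0 u1 d).
Proof.
intros Hab Hd1 Hd2.
assert (Hba : b - a <> 0) by lra.
destruct q as [q1 q2], u0 as [x0 y0], u1 as [x1 y1], d as [d1 d2].
unfold tangency_point, cross, scale, vsub; cbn [fst snd] in *.
split.
- intros [E1 E2].
  apply (f_equal (Rmult b)) in E1 as bE1; apply (f_equal (Rmult a)) in E1 as aE1.
  f_equal; field_simplify_eq; auto; lra.
- intros E; injection E as -> ->; split; field; auto.
Qed.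

Section TwoCirclesAndEllipse.

Variables (a b : R) (p : nat -> R * R).
Hypotheses (Ha : 0 < a) (Hab : a < b).

Let F := curve_family a b p.
Let d := vsub (p 2%nat) (p 1%nat).

Lemma tangent3_conditions c q : 0 < c 1%nat -> tangent_at 3 F c q ->
  cross (vsub q (p 1%nat)) d = 0 /\ cross (scale a b (vsub q (p 0%nat))) d = 0.
Proof.
intros Hc1 Ht; apply tangent_at_curve_family in Ht as [Hlev Hcross].
assert (Hq1 : vsub q (p 1%nat) <> (0, 0)).
{ apply vsub_neq0; intros ->.
  specialize (Hlev 1%nat ltac:(lia)); simpl in Hlev.
  rewrite <- Hlev in Hc1; unfold circle_fun in Hc1; lra. }
pose proof (Hcross 1%nat 2%nat ltac:(lia) ltac:(lia)) as H12.
pose proof (Hcross 0%nat 1%nat ltac:(lia) ltac:(lia)) as H01.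
simpl in H12, H01; rewrite cross_scale_diag in H12.
assert (Hline : cross (vsub q (p 1%nat)) d = 0).
{ revert H12; unfold d, cross, vsub; cbn [fst snd]; lra. }
split; [exact Hline|].
apply (cross_eq0_trans _ _ (vsub q (p 1%nat)) Hq1).
- revert H01; unfold cross, scale, vsub; cbn [fst snd]; lra.
- revert Hline; unfold cross; lra.
Qed.

Lemma tangent3_of_conditions q : d <> (0, 0) ->
  cross (vsub q (p 1%nat)) d = 0 -> cross (scale a b (vsub q (p 0%nat))) d = 0 ->
  tangent_at 3 F (fun i => F i q) q.
Proof.
intros Hd Hline Hnormal; apply tangent_at_curve_family; split; [reflexivity|].
assert (Hpar : forall i, (i < 3)%nat -> cross (curve_grad a b p i q) d = 0).
{ intros [|[|[|i]]] Hi; [| | | lia]; simpl; revert Hline Hnormal;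
    unfold d, cross, scale, vsub; cbn [fst snd]; lra. }
intros i j Hi Hj; exact (cross_eq0_trans _ _ d Hd (Hpar i Hi) (Hpar j Hj)).
Qed.

Hypotheses (Hd1 : fst d <> 0) (Hd2 : snd d <> 0).

Let Q := tangency_point a b (p 0%nat) (p 1%nat) d.

Lemma tangent3_point c q : 0 < c 1%nat -> tangent_at 3 F c q -> q = Q.
Proof.
intros Hc1 Ht; apply tangency_pointP; [lra | exact Hd1 | exact Hd2 |].
exact (tangent3_conditions c q Hc1 Ht).
Qed.

Lemma tangent3_tangency_point : tangent_at 3 F (fun i => F i Q) Q.
Proof.
assert (Hd : d <> (0, 0)) by (intro E; apply Hd1; rewrite E; reflexivity).
destruct (proj2 (tangency_pointP a b (p 0%nat) (p 1%nat) d Q ltac:(lra) Hd1 Hd2)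
            eq_refl) as [Hline Hnormal].
exact (tangent3_of_conditions Q Hd Hline Hnormal).
Qed.

(* If [Q] were the centre [p i], the [i]-th genericity factor would vanish. *)
Lemma tangency_point_level_pos :
  cross (vsub (p 0%nat) (p 1%nat)) d <> 0 ->
  cross (scale a b (vsub (p 1%nat) (p 0%nat))) d <> 0 ->
  cross (scale a b (vsub (p 2%nat) (p 0%nat))) d <> 0 ->
  forall i, (i < 3)%nat -> 0 < F i Q.
Proof.
intros H0 H1 H2.
destruct (proj2 (tangency_pointP a b (p 0%nat) (p 1%nat) d Q ltac:(lra) Hd1 Hd2)
            eq_refl) as [Hline Hnormal].
intros [|[|[|i]]] Hi; [| | | lia]; unfold F; simpl;
  [| rewrite circle_fun_ellipse.. ]; apply ellipse_fun_pos; try lra; intros E;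
  rewrite E in Hline, Hnormal; contradiction.
Qed.

End TwoCirclesAndEllipse.

Definition generic3_discr (a b : R) (p : nat -> R * R) : R :=
  let d := vsub (p 2%nat) (p 1%nat) in
  fst d * snd d * cross (vsub (p 0%nat) (p 1%nat)) d *
  cross (scale a b (vsub (p 1%nat) (p 0%nat))) d *
  cross (scale a b (vsub (p 2%nat) (p 0%nat))) d.

Lemma tangent3_unique_of_generic a b p : 0 < a -> a < b -> generic3_discr a b p <> 0 ->
  exists c : nat -> R,
    (forall i, (i < 3)%nat -> 0 < c i) /\
    (exists q, tangent_at 3 (curve_family a b p) c q) /\
    (forall c' : nat -> R,
       (forall i, (i < 3)%nat -> 0 < c' i) ->
       (exists q, tangent_at 3 (curve_family a b p) c' q) ->
       forall i, (i < 3)%nat -> c' i = c i) /\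
    (forall q q', tangent_at 3 (curve_family a b p) c q ->
                  tangent_at 3 (curve_family a b p) c q' -> q = q').
Proof.
intros Ha Hab Hgen; unfold generic3_discr in Hgen.
apply Rmult_neq_0_reg in Hgen as [Hgen H2]; apply Rmult_neq_0_reg in Hgen as [Hgen H1].
apply Rmult_neq_0_reg in Hgen as [Hgen H0]; apply Rmult_neq_0_reg in Hgen as [Hd1 Hd2].
set (Q := tangency_point a b (p 0%nat) (p 1%nat) (vsub (p 2%nat) (p 1%nat))).
exists (fun i => curve_family a b p i Q); split; [|split; [|split]].
- exact (tangency_point_level_pos a b p Ha Hab Hd1 Hd2 H0 H1 H2).
- exists Q; exact (tangent3_tangency_point a b p Hab Hd1 Hd2).
- intros c' Hc' [q' Hq'] i Hi.
  rewrite <- (proj1 Hq' i Hi).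
  rewrite (tangent3_point a b p Hab Hd1 Hd2 c' q' (Hc' 1%nat ltac:(lia)) Hq').
  reflexivity.
- intros q q' Hq Hq'.
  pose proof (tangency_point_level_pos a b p Ha Hab Hd1 Hd2 H0 H1 H2 1%nat ltac:(lia))
    as HQ1.
  rewrite (tangent3_point a b p Hab Hd1 Hd2 _ q HQ1 Hq),
          (tangent3_point a b p Hab Hd1 Hd2 _ q' HQ1 Hq').
  reflexivity.
Qed.

Lemma tangent_circles_collinear l a b p c q : (3 < l)%nat ->
  tangent_at l (curve_family a b p) c q ->
  cross (vsub (p 2%nat) (p 1%nat)) (vsub (p 3%nat) (p 1%nat)) = 0.
Proof.
intros Hl Ht; apply tangent_at_curve_family in Ht as [_ Hcross].
rewrite (cross_vsub_centres q).
pose proof (Hcross 1%nat 2%nat ltac:(lia) ltac:(lia)) as H12.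
pose proof (Hcross 1%nat 3%nat ltac:(lia) ltac:(lia)) as H13.
pose proof (Hcross 2%nat 3%nat ltac:(lia) ltac:(lia)) as H23.
simpl in H12, H13, H23; rewrite cross_scale_diag in H12, H13, H23; lra.
Qed.

Definition PSub (P Q : mpoly) : mpoly := PAdd P (PMul (PConst (-1)) Q).
Definition PX (i : nat) : mpoly := PVar (2 * i).
Definition PY (i : nat) : mpoly := PVar (2 * i + 1).

Lemma peval_PX p i : peval (coords p) (PX i) = fst (p i).
Proof. unfold PX, coords; cbn [peval]; rewrite Nat.even_even, Nat.div2_double; reflexivity. Qed.

Lemma peval_PY p i : peval (coords p) (PY i) = snd (p i).
Proof.
unfold PY, coords; cbn [peval].
rewrite Nat.even_odd, Nat.add_1_r, Nat.div2_succ_double; reflexivity.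
Qed.

Definition Pcross_scale (a b : R) (i j k m : nat) : mpoly :=
  PSub (PMul (PMul (PConst a) (PSub (PX i) (PX j))) (PSub (PY k) (PY m)))
       (PMul (PMul (PConst b) (PSub (PY i) (PY j))) (PSub (PX k) (PX m))).

Lemma peval_Pcross_scale a b i j k m p :
  peval (coords p) (Pcross_scale a b i j k m) =
  cross (scale a b (vsub (p i) (p j))) (vsub (p k) (p m)).
Proof.
unfold Pcross_scale, PSub; cbn [peval]; rewrite !peval_PX, !peval_PY.
unfold cross, scale, vsub; simpl; ring.
Qed.

Lemma vars_lt_Pcross_scale l a b i j k m :
  (i < l)%nat -> (j < l)%nat -> (k < l)%nat -> (m < l)%nat ->
  vars_lt (2 * l) (Pcross_scale a b i j k m).
Proof. intros; unfold Pcross_scale, PSub, PX, PY; simpl; repeat split; lia. Qed.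

Lemma proper_algebraic_subset_zero_set l P p0 :
  vars_lt (2 * l) P -> peval (coords p0) P <> 0 ->
  proper_algebraic_subset l (fun p => peval (coords p) P = 0).
Proof.
intros HP Hp0; split; [|exists p0; exact Hp0].
exists (P :: nil); split.
- intros P' [<- | []]; exact HP.
- intros p; split.
  + intros H P' [<- | []]; exact H.
  + intros H; apply H; left; reflexivity.
Qed.

Definition generic3_poly (a b : R) : mpoly :=
  PMul (PMul (PMul (PMul (PSub (PX 2) (PX 1)) (PSub (PY 2) (PY 1)))
                   (Pcross_scale 1 1 0 1 2 1))
             (Pcross_scale a b 1 0 2 1))
       (Pcross_scale a b 2 0 2 1).

Lemma peval_generic3_poly a b p :
  peval (coords p) (generic3_poly a b) = generic3_discr a b p.
Proof.
unfold generic3_poly, generic3_discr, PSub; cbn [peval].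
rewrite !peval_Pcross_scale, !peval_PX, !peval_PY, scale_1_1; simpl; ring.
Qed.

Lemma vars_lt_generic3_poly a b : vars_lt 6 (generic3_poly a b).
Proof.
unfold generic3_poly, PSub; simpl.
repeat split; try (apply (vars_lt_Pcross_scale 3); lia); unfold PX, PY; simpl; lia.
Qed.

Lemma generic3_discr_witness a b : 0 < a -> a < b ->
  generic3_discr a b (fun n => match n with 1%nat => (0, 1) | 2%nat => (1, 2) | _ => (0, 0) end)
  <> 0.
Proof.
intros Ha Hab; unfold generic3_discr, cross, scale, vsub; simpl.
intros E; assert (E' : b * (2 * b - a) = 0) by (rewrite <- E; ring).
apply Rmult_integral in E' as [|]; lra.
Qed.

Definition collinear_poly : mpoly := Pcross_scale 1 1 2 1 3 1.

Lemma peval_collinear_poly p :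
  peval (coords p) collinear_poly = cross (vsub (p 2%nat) (p 1%nat)) (vsub (p 3%nat) (p 1%nat)).
Proof. unfold collinear_poly; rewrite peval_Pcross_scale, scale_1_1; reflexivity. Qed.

Lemma collinear_poly_witness :
  peval (coords (fun n => match n with 2%nat => (1, 0) | 3%nat => (0, 1) | _ => (0, 0) end))
    collinear_poly <> 0.
Proof. rewrite peval_collinear_poly; unfold cross, vsub; simpl; lra. Qed.

Theorem corollary2p2 (a b : R) (Ha : 0 < a) (Hab : a < b) :
  (exists Sigma : (nat -> R * R) -> Prop,
     proper_algebraic_subset 3 Sigma /\
     forall p : nat -> R * R, ~ Sigma p ->
       exists c : nat -> R,
         (forall i, (i < 3)%nat -> 0 < c i) /\
         (exists q, tangent_at 3 (curve_family a b p) c q) /\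
         (forall c' : nat -> R,
            (forall i, (i < 3)%nat -> 0 < c' i) ->
            (exists q, tangent_at 3 (curve_family a b p) c' q) ->
            forall i, (i < 3)%nat -> c' i = c i) /\
         (forall q q', tangent_at 3 (curve_family a b p) c q ->
                       tangent_at 3 (curve_family a b p) c q' -> q = q'))
  /\
  (forall l : nat, (3 < l)%nat ->
     exists Sigma : (nat -> R * R) -> Prop,
       proper_algebraic_subset l Sigma /\
       forall p : nat -> R * R, ~ Sigma p ->
         forall c : nat -> R, (forall i, (i < l)%nat -> 0 < c i) ->
           forall q, ~ tangent_at l (curve_family a b p) c q).
Proof.
split.
- exists (fun p => peval (coords p) (generic3_poly a b) = 0); split.
  + eapply proper_algebraic_subset_zero_set; [apply vars_lt_generic3_poly|].
    rewrite peval_generic3_poly; exact (generic3_discr_witness a b Ha Hab).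
  + intros p Hp; apply tangent3_unique_of_generic; [exact Ha | exact Hab |].
    rewrite <- peval_generic3_poly; exact Hp.
- intros l Hl; exists (fun p => peval (coords p) collinear_poly = 0); split.
  + eapply proper_algebraic_subset_zero_set; [|exact collinear_poly_witness].
    apply vars_lt_Pcross_scale; lia.
  + intros p Hp c _ q Ht; apply Hp.
    rewrite peval_collinear_poly; exact (tangent_circles_collinear l a b p c q Hl Ht).
Qed.
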